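(* Let $(\Delta,U,\mu_\Delta)$ be an expanding Young tower with $\mu_\Delta(\Delta_n)\le C\rho^n$. There exists $C>0$ such that for every finite $F\subset\mathbb N$ and all positive integers $(n_i)_{i\in F}$, $$\mu_\Delta\big(\{x\in\Delta_0:\forall i\in F,\ \phi(U_0^ix)=n_i\}\big)\le\prod_{i\in F}(C\rho^{n_i}).$$
   Context: Expanding Young tower: probability space $(\Delta,\mu_\Delta)$, measure-preserving $U$, partition $\{\Delta_{k,p}\}_{0\le k<r_p}$ with $U:\Delta_{k,p}\to\Delta_{k+1,p}$ and $U:\Delta_{r_p-1,p}\to\Delta_0=\bigcup_m\Delta_{0,m}$ measurable isomorphisms, and bounded distortion $|1-J(x)/J(y)|\le C\beta^{s(Ux,Uy)}$ for the inverse Jacobian $J$ of $U$ and $x,y$ in a common partition element ($s$ the separation time counted in returns to the basis). $\Delta_n=\bigcup_p\Delta_{n,p}$. $\phi$ is the first return time to $\Delta_0$ and $U_0=U^\phi$ the induced map on $\Delta_0$. *)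

From HB Require Import structures.
From mathcomp Require Import all_boot all_order all_algebra.
From mathcomp Require Import all_classical all_reals all_analysis.

Set Implicit Arguments.
Unset Strict Implicit.
Unset Printing Implicit Defensive.

Import Order.TTheory GRing.Theory Num.Theory.
Local Open Scope classical_set_scope.
Local Open Scope ring_scope.

Section YoungTower.
Context {d : measure_display} {T : measurableType d} {R : realType}
        {I : countType}.

Definition level (D : nat -> I -> set T) (n : nat) : set T :=
  \bigcup_(p in [set: I]) D n p.

Definition same_elt (D : nat -> I -> set T) (x y : T) : Prop :=
  exists k p, D k p x /\ D k p y.

Definition visits (U : T -> T) (A : set T) (x : T) (m : nat) : nat :=
  count (fun k => `[< A (iter k U x) >]) (iota 0 m).

(* s(x,y) >= n, where s is the separation time counted in returns to
   the basis A = Delta_0: the orbits of x and y stay in common partition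
   elements at every time k at which fewer than n visits to A occurred. *)
Definition sep_ge (D : nat -> I -> set T) (U : T -> T) (A : set T)
  (x y : T) (n : nat) : Prop :=
  forall k, (visits U A x k < n)%N -> same_elt D (iter k U x) (iter k U y).

(* first return time to A (0 if x never returns) *)
Definition first_return (U : T -> T) (A : set T) (x : T) : nat :=
  match pselect (exists n, `[< A (iter n.+1 U x) >]) with
  | left h => (ex_minn h).+1
  | right _ => 0%N
  end.

(* Expanding Young tower (Delta = T, mu, U) with partition
   {Delta_{k,p}}_{0 <= k < r p} (D k p = Delta_{k,p}), inverse Jacobian J
   and bounded distortion constants Cd, beta. *)
Definition expanding_young_tower (mu : probability T R) (U : T -> T)
  (D : nat -> I -> set T) (r : I -> nat) (J : T -> R) (Cd beta : R) : Prop :=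
  let Delta0 := level D 0 in
  [/\
      (forall p, (0 < r p)%N) /\
      (forall k p, measurable (D k p)) /\
      (forall k p, (r p <= k)%N -> D k p = set0) /\
      (forall x, exists k p, D k p x) /\
      (forall k p k' p' x, D k p x -> D k' p' x -> k = k' /\ p = p'),
      measurable_fun setT U /\
      (forall A, measurable A -> mu (U @^-1` A) = mu A),
      (forall k p, (k.+1 < r p)%N -> set_bij (D k p) (D k.+1 p) U) /\
      (forall p, set_bij (D (r p).-1 p) Delta0 U) /\
      (forall k p A, measurable A -> A `<=` D k p -> measurable (U @` A)),
      (forall x, 0 < J x) /\ measurable_fun setT J /\
      (forall k p A, measurable A -> A `<=` D k p ->
         mu (U @` A) = (\int[mu]_(x in A) ((J x)^-1)%:E)%E) &
      [/\ 0 < Cd, 0 < beta, beta < 1 &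
       forall k p x y n, D k p x -> D k p y ->
         sep_ge D U Delta0 (U x) (U y) n ->
         `|1 - J x / J y| <= Cd * beta ^+ n]].

End YoungTower.

(* On [Delta_{0,p}] the first return time is the height [r p] of the column
   and [U0 = U^(r p)], so the cylinder [{x in Delta0 | phi (U0^i x) = n_i}]
   splits into the pieces [Delta_{0,p} `&` U^-(r p) S'], where [S'] is the
   shifted cylinder and, when the condition at time 0 is present,
   [r p = n_0].  By invariance each piece has the measure of
   [Delta_{r p - 1,p} `&` U^-1 S'], and bounded distortion of the last step
   [U : Delta_{r p - 1,p} -> Delta0] gives
   [mu Delta0 * mu (Delta_{r p - 1,p} `&` U^-1 S')
      <= (1 + Cd)^2 * mu Delta_{r p - 1,p} * mu S'].
   Summing over [p] bounds the cylinder by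
   [(1 + Cd)^2 * mu Delta_{n_0 - 1} / mu Delta0 * mu S' <= C rho^(n_0) mu S'];
   iterating over the times in [F] yields the product. *)

From HB Require Import structures.
From mathcomp Require Import all_boot all_order all_algebra.
From mathcomp Require Import all_classical all_reals all_analysis.
From mathcomp Require Import finmap measurable_realfun.
From mathcomp Require Import ring lra zify.

Import Order.TTheory GRing.Theory Num.Theory.
Local Open Scope classical_set_scope.
Local Open Scope ring_scope.

Set Implicit Arguments.
Unset Strict Implicit.
Unset Printing Implicit Defensive.

Section measure_facts.
Context {d : measure_display} {T : measurableType d} {R : realType}.

Lemma measurable_fun_inv_gt0 (f : T -> R) : (forall x, 0 < f x) ->
  measurable_fun setT f -> measurable_fun setT (fun x => (f x)^-1).
Proof.
move=> f_gt0 mf.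
apply: (@measurable_comp _ _ _ T R R `]0, +oo[%classic GRing.inv setT f) => //.
- by move=> _ [x _ <-] /=; rewrite in_itv /= andbT.
- apply: open_continuous_measurable_fun; first exact: interval_open.
  move=> x /set_mem; rewrite /= in_itv /= andbT => x_gt0.
  by apply: inv_continuous; rewrite gt_eqF.
Qed.

Lemma bigcup_measurable_countable (I : countType) (Q : set I) (F : I -> set T) :
  (forall p, Q p -> measurable (F p)) -> measurable (\bigcup_(p in Q) F p).
Proof.
move=> mF; rewrite bigcup_mkcond; apply: countable_bigcupT_measurable => // p.
by case: ifPn => // /set_mem; exact: mF.
Qed.

Local Open Scope ereal_scope.

Lemma measure_bigcup_countable (I : countType) (mu : {measure set T -> \bar R})
    (Q : set I) (F : I -> set T) :
  (forall p, Q p -> measurable (F p)) -> trivIset Q F ->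
  mu (\bigcup_(p in Q) F p) = \esum_(p in Q) mu (F p).
Proof.
move=> mF tF; pose G k := oapp F set0 (pickle_inv k).
have GE p : G (choice.pickle p) = F p by rewrite /G pickleK_inv.
have pinj : set_inj Q choice.pickle.
  by move=> p q _ _; exact: (pcan_inj pickleK_inv).
have -> : \bigcup_(p in Q) F p = \bigcup_(k in choice.pickle @` Q) G k.
  by rewrite bigcup_image; apply: eq_bigcupr => p _; rewrite GE.
rewrite measure_bigcup.
- rewrite nneseries_esum // set_mem_set esum_image //.
  by apply: eq_esum => p _; rewrite GE.
- by move=> _ [p Qp <-]; rewrite GE; exact: mF.
- by move=> _ _ [p Qp <-] [q Qq <-]; rewrite !GE => /(tF _ _ Qp Qq) ->.
Qed.

Lemma le_measure_bigcup_countable (I : countType)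
    (nu1 nu2 : {measure set T -> \bar R}) (Q : set I) (F G : I -> set T) :
  (forall p, Q p -> measurable (F p)) -> (forall p, Q p -> measurable (G p)) ->
  trivIset Q F -> trivIset Q G ->
  (forall p, Q p -> nu1 (F p) <= nu2 (G p)) ->
  nu1 (\bigcup_(p in Q) F p) <= nu2 (\bigcup_(p in Q) G p).
Proof.
move=> mF mG tF tG le_FG.
by rewrite !measure_bigcup_countable //; exact: le_esum.
Qed.

End measure_facts.

Section young_tower.
Context {d : measure_display} {T : measurableType d} {R : realType}
  {I : countType}.
Variables (mu : probability T R) (U : T -> T) (D : nat -> I -> set T)
  (r : I -> nat) (J : T -> R) (Cd beta : R).
Hypothesis tower : expanding_young_tower mu U D r J Cd beta.

Local Notation Delta0 := (level D 0).
Local Notation phi := (first_return U Delta0).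

Let r_gt0 p : (0 < r p)%N.
Proof. by case: tower => -[rp _]. Qed.

Let measurable_D k p : measurable (D k p).
Proof. by case: tower => -[_ [mD _]]. Qed.

Let D_ge_r k p : (r p <= k)%N -> D k p = set0.
Proof. by case: tower => -[_ [_ [Dge _]]] *; exact: Dge. Qed.

Let D_cover x : exists k p, D k p x.
Proof. by case: tower => -[_ [_ [_ [Dcov _]]]]. Qed.

Let D_uniq k p k' p' x : D k p x -> D k' p' x -> k = k' /\ p = p'.
Proof. by case: tower => -[_ [_ [_ [_ Duniq]]]] _ _ _ _; exact: Duniq. Qed.

Let measurable_U : measurable_fun setT U.
Proof. by case: tower => _ [mU _]. Qed.

Let U_preserving A : measurable A -> mu (U @^-1` A) = mu A.
Proof. by case: tower => _ [_ Upres] *; exact: Upres. Qed.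

Let U_bij_step k p : (k.+1 < r p)%N -> set_bij (D k p) (D k.+1 p) U.
Proof. by case: tower => _ _ [bij _] *; exact: bij. Qed.

Let U_bij_top p : set_bij (D (r p).-1 p) Delta0 U.
Proof. by case: tower => _ _ [_ [bij _]]. Qed.

Let J_gt0 x : 0 < J x.
Proof. by case: tower => _ _ _ [Jpos _]. Qed.

Let measurable_J : measurable_fun setT J.
Proof. by case: tower => _ _ _ [_ [mJ _]]. Qed.

Let measure_image k p A : measurable A -> A `<=` D k p ->
  mu (U @` A) = (\int[mu]_(x in A) ((J x)^-1)%:E)%E.
Proof. by case: tower => _ _ _ [_ [_ Jint]] _; exact: Jint. Qed.

Let Cd_gt0 : 0 < Cd.
Proof. by case: tower => _ _ _ _ []. Qed.

Let distortion k p x y n : D k p x -> D k p y ->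
  sep_ge D U Delta0 (U x) (U y) n -> `|1 - J x / J y| <= Cd * beta ^+ n.
Proof. by case: tower => _ _ _ _ [_ _ _ dist]; exact: dist. Qed.

Let measureE A : measurable A -> mu A = (fine (mu A))%:E.
Proof. by move=> mA; rewrite fineK //; exact: fin_num_measure. Qed.

Lemma D_lt_r k p x : D k p x -> (k < r p)%N.
Proof.
by move=> Dx; rewrite ltnNge; apply/negP => /D_ge_r Dkp; rewrite Dkp in Dx.
Qed.

Lemma D_succ k p x : D k p x -> (k.+1 < r p)%N -> D k.+1 p (U x).
Proof. by move=> Dx /U_bij_step[mapU _ _]; exact: mapU. Qed.

Lemma D_top_return p x : D (r p).-1 p x -> Delta0 (U x).
Proof. by have [mapU _ _] := U_bij_top p; exact: mapU. Qed.

Lemma D_pred k p x : D k.+1 p (U x) -> D k p x.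
Proof.
move=> DUx; have [k' [q Dx]] := D_cover x.
have [lt_k'r|ge_k'r] := ltnP k'.+1 (r q).
  by have [[->] ->] := D_uniq DUx (D_succ Dx lt_k'r).
have {ge_k'r} ek : k' = (r q).-1 by move: (D_lt_r Dx) ge_k'r; lia.
rewrite ek in Dx; have [q' _ DUx'] := D_top_return Dx.
by have [] := D_uniq DUx DUx'.
Qed.

Lemma D0_of_iter k p x : D k p (iter k U x) -> D 0 p x.
Proof. by elim: k x => [//|k IHk] x /D_pred /IHk. Qed.

Lemma D_iter k p x : D 0 p x -> (k < r p)%N -> D k p (iter k U x).
Proof.
move=> D0x; elim: k => [//|k IHk] lt_kr.
exact: D_succ (IHk (ltnW lt_kr)) lt_kr.
Qed.

Lemma D_top_iter p x : D 0 p x -> D (r p).-1 p (iter (r p).-1 U x).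
Proof. by move=> D0x; apply: D_iter D0x _; rewrite ltn_predL. Qed.

Lemma iter_r_return p x : D 0 p x -> Delta0 (iter (r p) U x).
Proof.
by move=> /D_top_iter /D_top_return; rewrite -iterS prednK.
Qed.

Lemma first_return_D0 p x : D 0 p x -> phi x = r p.
Proof.
move=> D0x; rewrite /first_return; case: pselect => [ex|]; last first.
  case; exists (r p).-1; apply/asboolP.
  by rewrite prednK //; exact: iter_r_return.
case: ex_minnP => m /asboolP [q _ Dq] min_m; rewrite -[RHS](prednK (r_gt0 p)).
congr _.+1; apply/eqP; rewrite eqn_leq; apply/andP; split.
  by apply: min_m; apply/asboolP; rewrite prednK //; exact: iter_r_return.
rewrite leqNgt; apply/negP => lt_mr.
have [] := D_uniq Dq (D_iter D0x _ : D m.+1 p _) => //.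
by rewrite -ltn_predRL.
Qed.

Lemma measurable_level n : measurable (level D n).
Proof. exact: countable_bigcupT_measurable. Qed.

Lemma measurable_iter j : measurable_fun setT (iter j U).
Proof.
elim: j => [|j IHj]; first exact: measurable_id.
by rewrite (_ : iter j.+1 U = U \o iter j U) //; exact: measurableT_comp.
Qed.

Lemma measurable_preimage_iter j A :
  measurable A -> measurable (iter j U @^-1` A).
Proof. by move=> mA; rewrite -[_ @^-1` _]setTI; exact: measurable_iter. Qed.

Lemma measurable_D_preimage_iter k p j A :
  measurable A -> measurable (D k p `&` iter j U @^-1` A).
Proof. by move=> mA; exact: measurableI (measurable_preimage_iter j mA). Qed.

Lemma measure_preimage_iter j A : measurable A -> mu (iter j U @^-1` A) = mu A.
Proof.
elim: j A => [//|j IHj] A mA.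
rewrite (_ : _ @^-1` _ = U @^-1` (iter j U @^-1` A)); last first.
  by apply/seteqP; split => x; rewrite /= -iterSr.
by rewrite U_preserving ?IHj //; exact: measurable_preimage_iter.
Qed.

Lemma trivIset_sub_D (h : I -> nat) (Q : set I) (G : I -> set T) :
  (forall p, G p `<=` D (h p) p) -> trivIset Q G.
Proof.
by move=> sGD p q _ _ [x [/sGD Dpx /sGD Dqx]]; have [] := D_uniq Dpx Dqx.
Qed.

Lemma J_le k p x y : D k p x -> D k p y -> J x <= (1 + Cd) * J y.
Proof.
move=> Dx Dy; have sep0 : sep_ge D U Delta0 (U x) (U y) 0.
  by move=> i; rewrite ltn0.
have := distortion Dx Dy sep0; rewrite expr0 mulr1 => dist_xy.
rewrite -ler_pdivrMr //; move: (ler_norm (J x / J y - 1)); rewrite distrC.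
lra.
Qed.

Let measurable_invJ : measurable_fun setT (fun x => ((J x)^-1)%:E).
Proof. by apply/measurable_EFinP; exact: measurable_fun_inv_gt0. Qed.

Section image_bounds.
Variables (k : nat) (p : I) (A : set T) (y : T).
Hypotheses (mA : measurable A) (sAD : A `<=` D k p) (Dy : D k p y).

Lemma measure_image_le : (mu (U @` A) <= ((1 + Cd) / J y)%:E * mu A)%E.
Proof.
rewrite (measure_image mA sAD) -integral_cst //; apply: ge0_le_integral => //.
- by move=> x _; rewrite lee_fin ltW // invr_gt0.
- exact: measurable_funTS.
- move=> x /sAD Dx; rewrite lee_fin ler_pdivlMr // mulrC ler_pdivrMr //.
  exact: J_le Dy Dx.
Qed.

Lemma measure_image_ge : (((J y)^-1 / (1 + Cd))%:E * mu A <= mu (U @` A))%E.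
Proof.
rewrite (measure_image mA sAD) -integral_cst //; apply: ge0_le_integral => //.
- by move=> x _; rewrite lee_fin divr_ge0 // ltW // ?invr_gt0 // addr_gt0.
- exact: measurable_funTS.
- move=> x /sAD Dx; rewrite lee_fin ler_pdivrMr ?addr_gt0 // mulrC.
  by rewrite ler_pdivlMr // mulrC ler_pdivrMr //; exact: J_le Dx Dy.
Qed.

End image_bounds.

Lemma measure_image_ratio k p A B : measurable A -> A `<=` D k p ->
  measurable B -> B `<=` D k p ->
  (mu (U @` A) * mu B <= ((1 + Cd) ^+ 2)%:E * mu A * mu (U @` B))%E.
Proof.
move=> mA sAD mB sBD; have K_gt0 : 0 < 1 + Cd by rewrite addr_gt0.
have [[y By]|B0] := pselect (exists y, B y); last first.
  have -> : B = set0 by apply/seteqP; split => // x Bx; apply: B0; exists x.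
  by rewrite measure0 mule0 mule_ge0 // mule_ge0 // lee_fin sqr_ge0.
have Dy := sBD y By; set c := (J y)^-1.
apply: le_trans (lee_wpmul2r (measure_ge0 _ _) (measure_image_le mA sAD Dy)) _.
have -> : (1 + Cd) / J y = (1 + Cd) ^+ 2 * (c / (1 + Cd)).
  by rewrite /c; field; rewrite !gt_eqF.
rewrite EFinM -!muleA lee_wpmul2l ?lee_fin ?sqr_ge0 // muleCA.
rewrite lee_wpmul2l ?measure_ge0 //.
exact: measure_image_ge mB sBD Dy.
Qed.

Lemma measure_top_preimage p B : measurable B -> B `<=` Delta0 ->
  (mu Delta0 * mu (D (r p).-1 p `&` U @^-1` B) <=
    ((1 + Cd) ^+ 2)%:E * mu (D (r p).-1 p) * mu B)%E.
Proof.
move=> mB sB0; have [mapU _ ontoU] := U_bij_top p.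
have UDtop : U @` D (r p).-1 p = Delta0.
  by apply/seteqP; split => [_ [x Dx <-]|]; [exact: mapU | exact: ontoU].
have UDB : U @` (D (r p).-1 p `&` U @^-1` B) = B.
  apply/seteqP; split => [_ [x [_ Bx] <-] //|y By].
  have [x Dx Uxy] := ontoU y (sB0 y By).
  by exists x => //; split => //=; rewrite Uxy.
have mDB := measurable_D_preimage_iter (r p).-1 p 1 mB.
have := measure_image_ratio (measurable_D (r p).-1 p) (@subset_refl _ _) mDB.
by rewrite UDtop UDB; apply; exact: subIsetl.
Qed.

Local Notation U0 := (fun x => iter (phi x) U x).

Definition cylinder (P : pred nat) (n : nat -> nat) : set T :=
  [set x | Delta0 x /\ forall i, P i -> phi (iter i U0 x) = n i].

Local Notation tail_cylinder P n :=
  (cylinder (fun i => P i.+1) (fun i => n i.+1)).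

Lemma cylinder_pred0 (P : pred nat) n :
  (forall i, ~~ P i) -> cylinder P n = Delta0.
Proof.
move=> P0; apply/seteqP; split=> [x [] //|x D0x]; split=> // i Pi.
by move: (P0 i); rewrite Pi.
Qed.

Lemma cylinder_bigcup P n : cylinder P n =
  \bigcup_(p in [set p | P 0%N -> r p = n 0%N])
    (D 0 p `&` iter (r p) U @^-1` tail_cylinder P n).
Proof.
have U0_D0 p x : D 0 p x -> U0 x = iter (r p) U x.
  by move=> D0x; rewrite (first_return_D0 D0x).
apply/seteqP; split=> [x [[p _ D0x] cyl_x]|x [p r_n [D0x [_ cyl_x]]]].
- exists p; first by move=> /cyl_x; rewrite /= (first_return_D0 D0x).
  split=> //; split; first exact: iter_r_return.
  by move=> i /cyl_x; rewrite iterSr (U0_D0 p x D0x).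
- split; first by exists p.
  case=> [|i] Pi; first by rewrite /= (first_return_D0 D0x) r_n.
  by rewrite iterSr (U0_D0 p x D0x); exact: cyl_x.
Qed.

Lemma measurable_cylinder_tail P n :
  measurable (tail_cylinder P n) -> measurable (cylinder P n).
Proof.
move=> mS; rewrite cylinder_bigcup; apply: bigcup_measurable_countable => p _.
exact: measurable_D_preimage_iter.
Qed.

Lemma measurable_cylinder m (P : pred nat) n :
  (forall i, P i -> (i < m)%N) -> measurable (cylinder P n).
Proof.
elim: m P n => [|m IHm] P n P_lt.
  rewrite cylinder_pred0; first exact: measurable_level.
  by move=> i; apply/negP => /P_lt.
by apply/measurable_cylinder_tail/IHm => i /P_lt.
Qed.

Lemma measure_D0_preimage p S : measurable S ->
  mu (D 0 p `&` iter (r p) U @^-1` S) = mu (D (r p).-1 p `&` U @^-1` S).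
Proof.
move=> mS; rewrite -[RHS](measure_preimage_iter (r p).-1); last first.
  exact: (measurable_D_preimage_iter _ _ 1).
congr (mu _); apply/seteqP; split=> x /=.
- by move=> [D0x Sx]; split; [exact: D_top_iter | rewrite -iterS prednK].
- by move=> [/D0_of_iter D0x Sx]; split; rewrite // -(prednK (r_gt0 p)) iterS.
Qed.

Lemma measure_cylinder_le_tail P n : measurable (tail_cylinder P n) ->
  (mu (cylinder P n) <= mu (tail_cylinder P n))%E.
Proof.
move=> mS; rewrite cylinder_bigcup -(measure_preimage_iter 1 mS).
set Q := [set p | _]; set S := tail_cylinder P n.
apply: (@le_trans _ _ (mu (\bigcup_(p in Q) (D (r p).-1 p `&` U @^-1` S)))).
  apply: le_measure_bigcup_countable.
  - by move=> p _; exact: measurable_D_preimage_iter.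
  - by move=> p _; exact: (measurable_D_preimage_iter _ _ 1).
  - by apply: (@trivIset_sub_D (fun=> 0%N)) => q; exact: subIsetl.
  - by apply: (@trivIset_sub_D (fun q => (r q).-1)) => q; exact: subIsetl.
  (* [/(mu _)] turns the measure coercion of [mu] back into the probability *)
  - by move=> p _; rewrite -[leLHS]/(mu _) measure_D0_preimage.
apply: le_measure; last by move=> x [p _ []].
- apply/mem_set/bigcup_measurable_countable => p _.
  exact: (measurable_D_preimage_iter _ _ 1).
- exact/mem_set/(measurable_preimage_iter 1 mS).
Qed.

Lemma measure_cylinder_le_head (P : pred nat) n : P 0%N ->
  measurable (tail_cylinder P n) ->
  (mu Delta0 * mu (cylinder P n) <=
    ((1 + Cd) ^+ 2)%:E * mu (level D (n 0%N).-1) * mu (tail_cylinder P n))%E.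
Proof.
move=> P0 mS; rewrite cylinder_bigcup.
set Q := [set p | _]; set S := tail_cylinder P n.
have l_ge0 : 0 <= fine (mu Delta0) by exact/fine_ge0/measure_ge0.
have KS_ge0 : 0 <= (1 + Cd) ^+ 2 * fine (mu S).
  by rewrite mulr_ge0 ?sqr_ge0 //; exact/fine_ge0/measure_ge0.
rewrite (measureE (measurable_level 0)) (measureE mS) muleAC -EFinM.
(* compare the measures [mu Delta0 * mu] and [(1 + Cd)^2 mu S * mu] piecewise *)
apply: le_trans (@le_measure_bigcup_countable _ _ _ _
  (mscale (NngNum l_ge0) mu) (mscale (NngNum KS_ge0) mu) Q
  (fun p => D 0 p `&` iter (r p) U @^-1` S) (fun p => D (r p).-1 p)
  _ _ _ _ _) _.
- by move=> p _; exact: measurable_D_preimage_iter.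
- by move=> p _; exact: measurable_D.
- by apply: (@trivIset_sub_D (fun=> 0%N)) => q; exact: subIsetl.
- exact: (@trivIset_sub_D (fun q => (r q).-1) _ _ (fun q => @subset_refl _ _)).
- move=> p _; rewrite -[leRHS]/(mscale _ _ _) /mscale /=.
  rewrite -[X in (_ * X <= _)%E]/(mu _) measure_D0_preimage //.
  rewrite -(measureE (measurable_level 0)) EFinM muleAC -(measureE mS).
  by apply: measure_top_preimage => // x [].
rewrite -[leLHS]/(mscale _ _ _) /mscale /= lee_wpmul2l ?lee_fin //.
apply: le_measure; last by move=> x [p /(_ P0) <- Dx]; exists p.
- by apply/mem_set/bigcup_measurable_countable => p _; exact: measurable_D.
- exact/mem_set/(measurable_level _).
Qed.

Section cylinder_bound.
Variables (C0 rho : R).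
Hypotheses (rho_gt0 : 0 < rho) (Delta0_gt0 : (0 < mu Delta0)%E)
  (level_le : forall k, (mu (level D k) <= (C0 * rho ^+ k)%:E)%E).

Local Notation C := ((1 + Cd) ^+ 2 * C0 / (fine (mu Delta0) * rho)).

Lemma cylinder_constant_gt0 : 0 < C.
Proof.
have C0_gt0 : 0 < C0.
  by have := lt_le_trans Delta0_gt0 (level_le 0); rewrite expr0 mulr1 lte_fin.
have l_gt0 : 0 < fine (mu Delta0).
  apply: fine_gt0; rewrite Delta0_gt0 (le_lt_trans _ (ltry 1)) //.
  exact/probability_le1/measurable_level.
by rewrite divr_gt0 ?mulr_gt0 ?exprn_gt0 ?addr_gt0.
Qed.

Lemma measure_cylinder_le_step (P : pred nat) n : P 0%N -> (0 < n 0%N)%N ->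
  measurable (tail_cylinder P n) ->
  (mu (cylinder P n) <= (C * rho ^+ n 0%N)%:E * mu (tail_cylinder P n))%E.
Proof.
move=> P0 n0_gt0 mS; have head := measure_cylinder_le_head P0 mS.
have lvl := level_le (n 0%N).-1.
set l := fine (mu Delta0); set c := fine (mu (cylinder P n)).
set s := fine (mu (tail_cylinder P n)); set L := fine (mu (level D (n 0%N).-1)).
have lE : mu Delta0 = l%:E := measureE (measurable_level 0).
have LE : mu (level D (n 0%N).-1) = L%:E := measureE (measurable_level _).
have cE : mu (cylinder P n) = c%:E := measureE (measurable_cylinder_tail mS).
have sE : mu (tail_cylinder P n) = s%:E := measureE mS.
move: head lvl Delta0_gt0; rewrite lE LE cE sE -!EFinM !lee_fin lte_fin.
move=> head L_le l_gt0.
have L_ge0 : 0 <= L by exact/fine_ge0/measure_ge0.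
have s_ge0 : 0 <= s by exact/fine_ge0/measure_ge0.
have rho_n : rho ^+ n 0%N = rho * rho ^+ (n 0%N).-1 by rewrite -exprS prednK.
have lC : l * ((1 + Cd) ^+ 2 * C0 / (l * rho) * rho ^+ n 0%N * s) =
    (1 + Cd) ^+ 2 * (C0 * rho ^+ (n 0%N).-1) * s.
  by rewrite rho_n; field; rewrite !gt_eqF.
rewrite -(ler_pM2l l_gt0) lC; apply: le_trans head _.
by rewrite ler_wpM2r // ler_wpM2l ?sqr_ge0.
Qed.

Lemma measure_cylinder_le_prod m (P : pred nat) n :
  (forall i, P i -> (i < m)%N) -> (forall i, P i -> (0 < n i)%N) ->
  (mu (cylinder P n) <= (\prod_(i < m | P i) (C * rho ^+ n i))%:E)%E.
Proof.
elim: m P n => [|m IHm] P n P_lt n_gt0.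
  rewrite big_pred0 => [|i]; last by apply/negP => /P_lt.
  rewrite cylinder_pred0 => [|i]; last by apply/negP => /P_lt.
  exact/probability_le1/measurable_level.
have tail_lt i : P i.+1 -> (i < m)%N by move/P_lt.
have mS := measurable_cylinder (fun i => n i.+1) tail_lt.
have IH := IHm _ _ tail_lt (fun i => n_gt0 i.+1).
rewrite big_mkcond big_ord_recl /= -big_mkcond /= EFinM.
case: ifP => P0; last first.
  by rewrite mul1e; exact: le_trans (measure_cylinder_le_tail mS) IH.
apply: le_trans (measure_cylinder_le_step P0 (n_gt0 _ P0) mS) _.
rewrite lee_wpmul2l // lee_fin mulr_ge0 ?exprn_ge0 ?ltW //.
exact: cylinder_constant_gt0.
Qed.
End cylinder_bound.

End young_tower.

Lemma big_fset_ord (R : Type) (idx : R) (op : Monoid.com_law idx)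
    (F : {fset nat}) (f : nat -> R) m :
  (forall i, i \in F -> (i < m)%N) ->
  \big[op/idx]_(i <- F) f i = \big[op/idx]_(i < m | (i : nat) \in F) f i.
Proof.
move=> F_lt; rewrite -(big_mkord (fun i => i \in F) f) -[in RHS]big_filter.
apply/perm_big/uniq_perm; rewrite ?fset_uniq ?filter_uniq ?iota_uniq //.
move=> i; rewrite mem_filter mem_iota add0n.
by case iF: (i \in F); rewrite //= subn0 F_lt.
Qed.

Lemma fset_lt_max (F : {fset nat}) i : i \in F -> (i < (\max_(j <- F) j).+1)%N.
Proof. by move=> iF; rewrite ltnS (leq_bigmax_seq _ iF). Qed.

Theorem lemmaA1 (d : measure_display) (T : measurableType d) (R : realType)
  (I : countType) (mu : probability T R) (U : T -> T)
  (D : nat -> I -> set T) (r : I -> nat) (J : T -> R) (Cd beta : R)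
  (C0 rho : R) :
  expanding_young_tower mu U D r J Cd beta ->
  0 < rho -> rho < 1 ->
  (forall n : nat, (mu (level D n) <= (C0 * rho ^+ n)%:E)%E) ->
  let Delta0 := level D 0 in
  let phi := first_return U Delta0 in
  let U0 := fun x => iter (phi x) U x in
  exists C : R, 0 < C /\
    forall (F : {fset nat}) (n : nat -> nat),
      (forall i, i \in F -> (0 < n i)%N) ->
      (mu [set x | Delta0 x /\ forall i, i \in F -> phi (iter i U0 x) = n i]
        <= (\prod_(i <- F) (C * rho ^+ n i))%:E)%E.
Proof.
move=> tower rho_gt0 _ level_le Delta0 phi U0.
have [Delta0_gt0|Delta0_le0] := ltP 0%E (mu Delta0).
  exists ((1 + Cd) ^+ 2 * C0 / (fine (mu Delta0) * rho)); split.
    exact: (cylinder_constant_gt0 tower rho_gt0 Delta0_gt0 level_le).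
  move=> F n n_gt0; rewrite (big_fset_ord _ _ (@fset_lt_max F)).
  exact: (measure_cylinder_le_prod tower rho_gt0 Delta0_gt0 level_le
    (P := fun i => i \in F) (@fset_lt_max F) n_gt0).
exists 1; split=> // F n _.
apply: le_trans (le_trans Delta0_le0 _); last first.
  by rewrite lee_fin; apply: prodr_ge0 => i _; rewrite mul1r exprn_ge0 // ltW.
apply: le_measure; last by move=> x [].
- exact/mem_set/(measurable_cylinder tower n (@fset_lt_max F)).
- exact/mem_set/(measurable_level tower 0).
Qed.
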